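(* Let $J$ be a countable set and $\mathcal{A}$ the non-unital algebra of finitely supported functions $J\to\mathbb{R}$ with pointwise operations. Let $\sigma:J\to J$ be a bijection, $\tilde{\sigma}(f)=f\circ\sigma^{-1}$, and $\Delta$ a $\tilde{\sigma}$-derivation on $\mathcal{A}$. If an element $\sum_{k=0}^m f_kx^k$ of degree $m$ (so $f_m\ne0$) of the Ore extension $\mathcal{A}[x,\tilde{\sigma},\Delta]$ belongs to the centralizer of $\mathcal{A}$, then $f_m=0$ on $Sep^m(J)$.
   Context: A $\tilde{\sigma}$-derivation is an $\mathbb{R}$-linear map $\Delta:\mathcal{A}\to\mathcal{A}$ with $\Delta(fg)=\tilde{\sigma}(f)\Delta(g)+\Delta(f)g$. $\mathcal{A}[x,\tilde{\sigma},\Delta]$ is the set of formal sums $\sum_{k=0}^m f_kx^k$, $f_k\in\mathcal{A}$, with coefficientwise addition and the associative bilinear multiplication determined by the rule $xf=\tilde{\sigma}(f)x+\Delta(f)$, i.e. $(fx^k)(gx^l)=f\,(x^kg)\,x^l$ where $x^kg\in\sum_i\mathcal{A}x^i$ is obtained by repeatedly applying this rule. The centralizer of $\mathcal{A}$ is the set of elements commuting with all elements of $\mathcal{A}$. $Sep^m(J)=\{p\in J:\sigma^m(p)\neq p\}$. *)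

From HB Require Import structures.
From mathcomp Require Import all_boot all_order all_algebra.
From mathcomp Require Import reals.
Set Implicit Arguments. Unset Strict Implicit. Unset Printing Implicit Defensive.
Import Order.TTheory GRing.Theory Num.Theory.
Local Open Scope ring_scope.

Section OreDefs.
Variables (J : countType) (R : realType).

Definition finsupp (f : J -> R) : Prop :=
  exists s : seq J, forall j, j \notin s -> f j = 0.

Definition tsigma (sigmai : J -> J) (f : J -> R) : J -> R := fun j => f (sigmai j).

Definition is_tsigma_derivation (sigmai : J -> J) (Delta : (J -> R) -> (J -> R)) : Prop :=
  [/\ (forall f, finsupp f -> finsupp (Delta f)),
      (forall (a : R) f g, finsupp f -> finsupp g ->
          Delta (fun j => a * f j + g j) = (fun j => a * Delta f j + Delta g j)) &
      (forall f g, finsupp f -> finsupp g ->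
          Delta (fun j => f j * g j) =
          (fun j => tsigma sigmai f j * Delta g j + Delta f j * g j))].

(* Elements of A[x, tsigma, Delta]: coefficient lists [:: f_0; ...; f_m]
   representing sum_k f_k x^k. *)
Definition ore_coef (P : seq (J -> R)) (k : nat) : J -> R := nth (fun _ => 0) P k.

Definition is_ore_elem (P : seq (J -> R)) : Prop :=
  forall k, (k < size P)%N -> finsupp (ore_coef P k).

(* xcoef k g i = coefficient of x^i in x^k g, computed by repeatedly applying
   x f = tsigma(f) x + Delta(f). *)
Fixpoint xcoef (sigmai : J -> J) (Delta : (J -> R) -> (J -> R))
    (k : nat) (g : J -> R) (i : nat) {struct k} : J -> R :=
  match k with
  | 0 => if i == 0%N then g else (fun _ => 0)
  | k'.+1 => fun j =>
      (if i is i'.+1 then tsigma sigmai (xcoef sigmai Delta k' g i') j else 0)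
      + Delta (xcoef sigmai Delta k' g i) j
  end.

(* The multiplication of the Ore extension: (f x^k)(g x^l) = f (x^k g) x^l,
   extended bilinearly.  ore_mul P Q i is the coefficient of x^i in P Q. *)
Definition ore_mul (sigmai : J -> J) (Delta : (J -> R) -> (J -> R))
    (P Q : seq (J -> R)) (i : nat) : J -> R :=
  fun j => \sum_(k < size P) \sum_(l < size Q | (l <= i)%N)
             ore_coef P k j * xcoef sigmai Delta k (ore_coef Q l) (i - l) j.

Definition in_centralizer_A (sigmai : J -> J) (Delta : (J -> R) -> (J -> R))
    (P : seq (J -> R)) : Prop :=
  forall g : J -> R, finsupp g ->
    ore_mul sigmai Delta [:: g] P = ore_mul sigmai Delta P [:: g].

End OreDefs.

From HB Require Import structures.
From mathcomp Require Import all_boot all_order all_algebra.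
From mathcomp Require Import reals.
From Stdlib Require Import FunctionalExtensionality.
Import Order.TTheory GRing.Theory Num.Theory.
Local Open Scope ring_scope.

(* Test the commutation with the indicator g of p and read off the top coefficient at p.
   In g P it is g(p) f_m(p) = f_m(p).  In P g only x^m g contributes to x^m, through its
   leading coefficient tsigma^m(g) = g o sigma^-m, which vanishes at p when
   sigma^m(p) <> p. *)

Lemma iter_can (T : Type) (f g : T -> T) (n : nat) :
  cancel f g -> cancel (iter n f) (iter n g).
Proof. by move=> fK; elim: n => // n IHn x; rewrite iterSr iterS fK IHn. Qed.

Section OreCoefficients.
Variables (J : countType) (R : realType) (sigmai : J -> J)
  (Delta : (J -> R) -> (J -> R)).

Hypothesis hDelta : is_tsigma_derivation sigmai Delta.

Lemma tsigma_derivation0 : Delta (fun _ => 0) = (fun _ => 0).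
Proof.
case: hDelta => _ Delta_lin _; have fs0 : finsupp (fun _ : J => (0 : R)) by exists [::].
have := Delta_lin 1 _ _ fs0 fs0.
have -> : (fun _ : J => 1 * (0 : R) + 0) = (fun _ => 0).
  by apply: functional_extensionality => j; rewrite mul1r addr0.
move=> eD; apply: functional_extensionality => j.
have /(congr1 (fun F => F j)) /= := eD; rewrite mul1r -{1}[Delta _ j]addr0.
by move/addrI.
Qed.

Lemma xcoef_eq0 k g i : (k < i)%N -> xcoef sigmai Delta k g i = (fun _ => 0).
Proof.
elim: k i => [|k IHk] [|i] //= lt_ki; apply: functional_extensionality => j.
by rewrite IHk // IHk ?(ltnW lt_ki) // tsigma_derivation0 /tsigma addr0.
Qed.

Lemma xcoef_diag k g j : xcoef sigmai Delta k g k j = g (iter k sigmai j).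
Proof.
elim: k j => [|k IHk] j //=.
by rewrite (@xcoef_eq0 k g k.+1 (ltnSn k)) tsigma_derivation0 addr0 /tsigma IHk -iterSr.
Qed.

Lemma ore_mul_constl g Q i j :
  ore_mul sigmai Delta [:: g] Q i j = g j * ore_coef Q i j.
Proof.
rewrite /ore_mul big_ord1.
transitivity (\sum_(l < size Q | l == i :> nat) g j * ore_coef Q l j).
  rewrite big_mkcond [RHS]big_mkcond; apply: eq_bigr => l _ /=.
  by rewrite subn_eq0; case: ltngtP; rewrite ?mulr0.
rewrite (big_ord1_eq _ (fun l => g j * ore_coef Q l j)); case: ltnP => // le_Q_i.
by rewrite /ore_coef nth_default ?mulr0.
Qed.

Lemma ore_mul_constr_lead P g m j : size P = m.+1 ->
  ore_mul sigmai Delta P [:: g] m j = ore_coef P m j * g (iter m sigmai j).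
Proof.
move=> sizeP; rewrite /ore_mul sizeP big_ord_recr /= big1 => [|k _].
  by rewrite add0r big_mkcond big_ord1 /= subn0 xcoef_diag.
by rewrite big_mkcond big_ord1 /= subn0 xcoef_eq0 // mulr0.
Qed.

End OreCoefficients.

Theorem theorem8 (J : countType) (R : realType) (sigma sigmai : J -> J)
  (sigmaK : cancel sigma sigmai) (sigmaiK : cancel sigmai sigma)
  (Delta : (J -> R) -> (J -> R))
  (hDelta : is_tsigma_derivation sigmai Delta)
  (m : nat) (P : seq (J -> R))
  (hP : is_ore_elem P) (hsize : size P = m.+1)
  (hlead : ore_coef P m <> (fun _ => 0))
  (hcent : in_centralizer_A sigmai Delta P) :
  forall p : J, iter m sigma p != p -> ore_coef P m p = 0.
Proof.
(* [hP], [hlead] and [sigmaK] are superfluous: one indicator function suffices. *)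
move=> p moved_p; pose g j : R := (j == p)%:R.
have fs_g : finsupp g by exists [:: p] => j; rewrite inE /g => /negbTE ->.
have := congr1 (fun F => F m p) (hcent _ fs_g).
rewrite /= ore_mul_constl ore_mul_constr_lead // /g eqxx mul1r => ->.
suff /negbTE -> : iter m sigmai p != p by rewrite mulr0.
by apply: contra moved_p => /eqP {1}<-; rewrite iter_can.
Qed.
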